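(* Let $G=(V,E)$ be a graph with a partition of its vertex set into sets $V_1,\dots,V_t$ ($t$ a positive integer), each $V_i$ being a set of pairwise false twins. Let $m_i=|V_i|$ for $1\le i\le t$. Let $\Gamma$ be a finite Abelian group of order $m$ with $\sum_{i=1}^t m_i=m-1$. If $\Gamma^*$ can be partitioned into pairwise disjoint sets $S_1,\dots,S_t$ with $|S_i|=m_i$ and $\sum_{s\in S_i}s=0$ for every $i$, then $G$ has a $\Gamma^*$-distance magic labeling.
   Context: $\Gamma^*=\Gamma\setminus\{0\}$. In a graph $G=(V,E)$, a set $M\subseteq V$ is a module if $N(x)\setminus M=N(y)\setminus M$ for all $x,y\in M$. Two vertices $x,y$ are twins if $\{x,y\}$ is a module; they are false twins if moreover $\{x,y\}\notin E$ and true twins if $\{x,y\}\in E$ (every vertex is considered a false and true twin of itself). A $\Gamma^*$-distance magic labeling of $G$ (with $|V|=|\Gamma|-1$) is a bijection $\ell\colon V\to\Gamma^*$ such that the weight $w(v)=\sum_{u\in N(v)}\ell(u)$ is the same element of $\Gamma$ for all $v\in V$. *)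

From HB Require Import structures.
From mathcomp Require Import all_boot all_algebra.
Set Implicit Arguments. Unset Strict Implicit. Unset Printing Implicit Defensive.
Import GRing.Theory.
Local Open Scope ring_scope.

Definition simple_graph (V : finType) (e : rel V) : Prop :=
  symmetric e /\ irreflexive e.

Definition nbhd (V : finType) (e : rel V) (x : V) : {set V} := [set y | e x y].

Definition is_module (V : finType) (e : rel V) (M : {set V}) : Prop :=
  forall x y, x \in M -> y \in M -> nbhd e x :\: M = nbhd e y :\: M.

Definition false_twins (V : finType) (e : rel V) (x y : V) : Prop :=
  is_module e [set x; y] /\ ~~ e x y.

Definition pairwise_false_twins (V : finType) (e : rel V) (A : {set V}) : Prop :=
  forall x y, x \in A -> y \in A -> false_twins e x y.

Definition block_partition (T : finType) (t : nat) (P : 'I_t -> {set T})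
  (U : {set T}) : Prop :=
  [/\ forall i j, i != j -> [disjoint P i & P j],
      \bigcup_(i < t) P i = U &
      forall i, P i != set0].

Definition distance_magic_labeling (V : finType) (e : rel V)
  (G : finZmodType) (l : V -> G) : Prop :=
  [/\ injective l,
      forall v, l v != 0,
      forall g : G, g != 0 -> exists v, l v = g &
      exists w : G, forall v, \sum_(u | e v u) l u = w].

(* Label each block V_i bijectively by S_i.  Since the vertices of a block are
   pairwise false twins, a vertex adjacent to one vertex of V_i is adjacent to
   all of them, so every neighbourhood is a union of whole blocks and every
   weight is a sum of block sums \sum_(s in S_i) s = 0. *)

From HB Require Import structures.
From mathcomp Require Import all_boot all_algebra.
Set Implicit Arguments. Unset Strict Implicit. Unset Printing Implicit Defensive.
Import GRing.Theory.
Local Open Scope ring_scope.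

Lemma false_twins_adj (V : finType) (e : rel V) (x y v : V) :
  simple_graph e -> false_twins e x y -> e v x -> e v y.
Proof.
move=> [esym eirr] [mod_xy nexy] evx.
have vNx : v != x by apply: contraTneq evx => ->; rewrite eirr.
have vNy : v != y by apply: contraNneq nexy => <-; rewrite esym.
have := mod_xy x y; rewrite !inE !eqxx orbT => /(_ isT isT) /setP /(_ v).
by rewrite !inE (negPf vNx) (negPf vNy) ![e _ v]esym evx.
Qed.

Lemma disjoint_family_mem_eq (T : finType) (I : eqType) (P : I -> {set T})
    (i j : I) (x : T) :
  (forall i j, i != j -> [disjoint P i & P j]) ->
  x \in P i -> x \in P j -> i = j.
Proof.
move=> Pdis xi xj; apply/eqP; apply: contraTT xj => neij.
by rewrite (disjointFr (Pdis _ _ neij) xi).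
Qed.

Section SetBijection.

Variables (T U : finType) (A : {set T}) (B : {set U}) (u0 : U).
Hypothesis cardAB : #|A| = #|B|.

Definition set_bij (x : T) : U := nth u0 (enum B) (index x (enum A)).

Lemma index_set_bij_lt x : x \in A -> (index x (enum A) < size (enum B))%N.
Proof.
by move=> xA; move: cardAB; rewrite !cardE => <-; rewrite index_mem mem_enum.
Qed.

Lemma set_bij_mem x : x \in A -> set_bij x \in B.
Proof. by move=> xA; rewrite -mem_enum mem_nth ?index_set_bij_lt. Qed.

Lemma set_bij_inj : {in A &, injective set_bij}.
Proof.
move=> x y xA yA /(congr1 (index^~ (enum B))).
rewrite /set_bij !(nthK u0 (enum_uniq _)) ?inE ?index_set_bij_lt //.
by apply: index_inj; rewrite ?mem_enum.
Qed.

Lemma set_bij_image : set_bij @: A = B.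
Proof.
apply/eqP; rewrite eqEcard card_in_imset; last exact: set_bij_inj.
rewrite cardAB leqnn andbT.
by apply/subsetP=> _ /imsetP[x xA ->]; apply: set_bij_mem.
Qed.

End SetBijection.

Section BlockIndex.

Variables (T : finType) (t : nat) (P : 'I_t -> {set T}) (i0 : 'I_t).
Hypothesis Pdis : forall i j, i != j -> [disjoint P i & P j].
Hypothesis Pcov : \bigcup_(i < t) P i = [set: T].

Definition block_index (x : T) : 'I_t := odflt i0 [pick i | x \in P i].

Lemma mem_block_index x : x \in P (block_index x).
Proof.
rewrite /block_index; case: pickP => [//|notin] /=.
have : x \in \bigcup_(i < t) P i by rewrite Pcov inE.
by case/bigcupP=> i _; rewrite notin.
Qed.

Lemma block_indexE x i : x \in P i -> block_index x = i.
Proof. exact/disjoint_family_mem_eq/mem_block_index. Qed.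

End BlockIndex.

Section BlockLabeling.

Variables (V : finType) (e : rel V) (G : finZmodType).
Variables (t : nat) (Vp : 'I_t -> {set V}) (S : 'I_t -> {set G}) (i0 : 'I_t).
Hypothesis Vdis : forall i j, i != j -> [disjoint Vp i & Vp j].
Hypothesis Vcov : \bigcup_(i < t) Vp i = [set: V].
Hypothesis Sdis : forall i j, i != j -> [disjoint S i & S j].
Hypothesis Scov : \bigcup_(i < t) S i = [set g : G | g != 0].
Hypothesis Scard : forall i, #|S i| = #|Vp i|.

Local Notation blk := (block_index Vp i0).
Let blkP := mem_block_index i0 Vcov.
Let blkE := block_indexE i0 Vdis Vcov.

Definition block_label (v : V) : G := set_bij (Vp (blk v)) (S (blk v)) 0 v.

Lemma block_label_image i : block_label @: Vp i = S i.
Proof.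
rewrite -(set_bij_image 0 (esym (Scard i))).
by apply: eq_in_imset => v vi; rewrite /block_label (blkE vi).
Qed.

Lemma block_label_mem v i : v \in Vp i -> block_label v \in S i.
Proof. by move=> vi; rewrite -block_label_image imset_f. Qed.

Lemma block_label_inj : injective block_label.
Proof.
move=> u v luv.
have eq_blk : blk u = blk v.
  apply: (disjoint_family_mem_eq Sdis (block_label_mem (blkP u))).
  by rewrite luv block_label_mem.
move: luv; rewrite /block_label eq_blk; apply: set_bij_inj => //.
by rewrite -eq_blk.
Qed.

Lemma block_label_neq0 v : block_label v != 0.
Proof.
have : block_label v \in \bigcup_(i < t) S i.
  by apply/bigcupP; exists (blk v); rewrite ?block_label_mem.
by rewrite Scov inE.
Qed.

Lemma block_label_surj g : g != 0 -> exists v, block_label v = g.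
Proof.
move=> gN0; have : g \in \bigcup_(i < t) S i by rewrite Scov inE.
by case/bigcupP=> i _; rewrite -block_label_image => /imsetP[v _ ->]; exists v.
Qed.

Lemma sum_block_label i : \sum_(v in Vp i) block_label v = \sum_(s in S i) s.
Proof.
rewrite -block_label_image big_imset //=.
by move=> u v _ _; apply: block_label_inj.
Qed.

Hypothesis adj_block : forall i v x y,
  x \in Vp i -> y \in Vp i -> e v x -> e v y.

Lemma block_label_weight v :
  \sum_(u | e v u) block_label u =
  \sum_(i | [exists u in Vp i, e v u]) \sum_(s in S i) s.
Proof.
rewrite (partition_big blk xpredT) //=.
rewrite (bigID (fun i => [exists u in Vp i, e v u])) /=.
rewrite [X in _ + X]big1 ?addr0; last first.
  move=> i /exists_inPn nadj; apply: big_pred0 => u.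
  apply/negbTE/andP => -[evu /eqP blk_u].
  by move: (nadj u); rewrite -blk_u blkP evu => /(_ isT).
apply: eq_bigr => i /exists_inP[u ui evu]; rewrite -sum_block_label.
apply: eq_bigl => x; apply/andP/idP => [[_ /eqP <-] // | xi].
by split; [apply: adj_block ui xi evu | rewrite (blkE xi)].
Qed.

End BlockLabeling.

Theorem proposition4p7 (V : finType) (e : rel V) (G : finZmodType)
  (t : nat) (Vp : 'I_t -> {set V}) (S : 'I_t -> {set G}) :
  simple_graph e ->
  (0 < t)%N ->
  block_partition Vp [set: V] ->
  (forall i, pairwise_false_twins e (Vp i)) ->
  (\sum_(i < t) #|Vp i| = #|G| - 1)%N ->
  (forall i j, i != j -> [disjoint S i & S j]) ->
  \bigcup_(i < t) S i = [set g : G | g != 0] ->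
  (forall i, #|S i| = #|Vp i|) ->
  (forall i, \sum_(s in S i) s = 0) ->
  exists l : V -> G, distance_magic_labeling e l.
Proof.
move=> simple_e t_gt0 [Vdis Vcov _] Vtwins _ Sdis Scov Scard Ssum.
have adj_block i v x y : x \in Vp i -> y \in Vp i -> e v x -> e v y.
  by move=> xi yi; apply: false_twins_adj simple_e (Vtwins i x y xi yi).
pose i0 := Ordinal t_gt0.
exists (block_label Vp S i0); split.
- exact: block_label_inj Vdis Vcov Sdis Scard.
- exact: block_label_neq0 Vdis Vcov Scov Scard.
- exact: block_label_surj Vdis Vcov Scov Scard.
- exists 0 => v; rewrite (block_label_weight i0 Vdis Vcov Sdis Scard adj_block).
  by rewrite big1 // => i _; rewrite Ssum.
Qed.
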